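(* For each $q\in\{25,49,121\}$ there exists an $(\mathbb{F}_4\times\mathbb{F}_q,\ \mathbb{F}_4\times\{0\},\ 4,1)$-BRDF and a nested $(4q,4,1)$-BIBD.
   Context: Here $\mathbb{F}_4\times\mathbb{F}_q$ is regarded as an additive group (the direct product of the additive groups of the finite fields). For a finite additive group $G$ with subgroup $H$, a $(G,H,k,\lambda)$-RDF is a collection of $k$-subsets of $G$ (base blocks) whose differences $x-y$ ($x\ne y$ in a common base block) cover every element of $G\setminus H$ exactly $\lambda$ times and no element of $H$; it is a BRDF if moreover all base blocks are disjoint from $H$ and the base blocks and their negatives are pairwise disjoint. A $(v,k,\lambda)$-BIBD is a set $X$ of $v$ points with a multiset $\mathcal{A}$ of $k$-subsets such that every pair of distinct points lies in exactly $\lambda$ blocks (partial: at most $\lambda$). A $(v,4,1)$-BIBD is nested if there is $\phi:\mathcal{A}\to X$ such that $\{A\cup\{\phi(A)\}\}$ is the block multiset of a partial $(v,5,2)$-BIBD on $X$ (in particular $\phi(A)\notin A$). *)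

From HB Require Import structures.
From mathcomp Require Import all_boot all_order all_algebra.
Set Implicit Arguments. Unset Strict Implicit. Unset Printing Implicit Defensive.
Import GRing.Theory.
Local Open Scope ring_scope.

HB.instance Definition _ (A B : finZmodType) := GRing.Zmodule.on (A * B)%type.

Definition diff_count (G : finZmodType) (n : nat) (B : 'I_n -> {set G}) (g : G) : nat :=
  (\sum_(i < n) #|[set p : G * G | [&& p.1 \in B i, p.2 \in B i, p.1 != p.2
                                     & (p.1 - p.2)%R == g]]|)%N.

Definition is_RDF (G : finZmodType) (H : {set G}) (k lambda : nat)
    (n : nat) (B : 'I_n -> {set G}) : Prop :=
  (forall i, #|B i| = k) /\
  (forall g : G, g \notin H -> diff_count B g = lambda) /\
  (forall g : G, g \in H -> diff_count B g = 0%N).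

Definition negset (G : finZmodType) (A : {set G}) : {set G} := [set - x | x in A].

Definition is_BRDF (G : finZmodType) (H : {set G}) (k lambda : nat)
    (n : nat) (B : 'I_n -> {set G}) : Prop :=
  is_RDF H k lambda B /\
  (forall i, [disjoint B i & H]) /\
  (forall i j, i != j -> [disjoint B i & B j]) /\
  (forall i j, [disjoint B i & negset (B j)]) /\
  (forall i j, i != j -> [disjoint negset (B i) & negset (B j)]).

Definition has_BRDF (G : finZmodType) (H : {set G}) (k lambda : nat) : Prop :=
  exists n (B : 'I_n -> {set G}), is_BRDF H k lambda B.

Definition pair_count (T : finType) (b : nat) (A : 'I_b -> {set T}) (x y : T) : nat :=
  #|[set i : 'I_b | (x \in A i) && (y \in A i)]|.

Definition is_BIBD (T : finType) (v k lambda : nat) (b : nat) (A : 'I_b -> {set T}) : Prop :=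
  #|T| = v /\ (forall i, #|A i| = k) /\
  (forall x y : T, x != y -> pair_count A x y = lambda).

Definition is_partial_BIBD (T : finType) (v k lambda : nat) (b : nat) (A : 'I_b -> {set T}) : Prop :=
  #|T| = v /\ (forall i, #|A i| = k) /\
  (forall x y : T, x != y -> (pair_count A x y <= lambda)%N).

Definition is_nested_BIBD (T : finType) (v : nat) (b : nat) (A : 'I_b -> {set T}) : Prop :=
  is_BIBD v 4 1 A /\
  exists phi : 'I_b -> T, is_partial_BIBD v 5 2 (fun i => phi i |: A i).

Definition has_nested_BIBD (v : nat) : Prop :=
  exists b (A : 'I_b -> {set 'I_v}), is_nested_BIBD v A.

From HB Require Import structures.
From mathcomp Require Import all_boot all_order all_algebra all_field.
Set Implicit Arguments. Unset Strict Implicit. Unset Printing Implicit Defensive.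
Import GRing.Theory.
Local Open Scope ring_scope.

(* For q = p^2 with p = 5, 7, 11, explicit base blocks in Z_2^2 x Z_p^2 are
   checked by computation and carried to F_4 x F_q by additive isomorphisms
   Z_2^2 ~ F_4 and Z_p^2 ~ F_q.
   The nested BIBD is the development of such a BRDF {B_j} relative to
   H = A x {0}: the translates B_j + g, nested by g, together with the cosets
   A x {c}, nested by (0, c + w), where 2w <> 0 and no element of a base block
   has second coordinate +-w. A pair {x, y} with x - y outside H lies in
   exactly one block; the extra points cover it at most once more, either
   through the point g (when x - y or y - x lies in some B_j, which happens
   for at most one block and one sign because the B_j and -B_j are pairwise
   disjoint) or through a coset (when x - y has second coordinate +-w), and
   the choice of w makes these cases exclusive. A pair inside a coset of H is
   covered only by the cosets, at most twice. *)

Lemma card_set_sum (I J : finType) (P : pred (I + J)) :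
  #|[set i | P i]| = (#|[set i | P (inl i)]| + #|[set j | P (inr j)]|)%N.
Proof. by rewrite -!sum1dep_card big_sumType. Qed.

Lemma card_set_pair (I J : finType) (P : I -> J -> bool) :
  #|[set p : I * J | P p.1 p.2]| = (\sum_i #|[set j | P i j]|)%N.
Proof.
transitivity (\sum_i \sum_(j | P i j) 1)%N.
  by rewrite pair_big_dep sum1dep_card; apply: eq_card => p; rewrite !inE.
by apply: eq_bigr => i _; rewrite sum1dep_card.
Qed.

Lemma card_set_eq_and (T : finType) (a : T) (b : bool) :
  #|[set u | (u == a) && b]| = b.
Proof.
case: b => /=; last by apply/eqP; rewrite cards_eq0; apply/eqP/setP => u; rewrite !inE andbF.
by rewrite -(cards1 a); apply: eq_card => u; rewrite !inE andbT.
Qed.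

Lemma sum_mem_disjoint_le1 (I T : finType) (F : I -> {set T}) x :
  (forall i j, i != j -> [disjoint F i & F j]) -> (\sum_i ((x \in F i) : nat) <= 1)%N.
Proof.
move=> disjF; have [i Fix | noF] := pickP (fun i => x \in F i); last first.
  by rewrite big1 // => i _; rewrite noF.
rewrite (bigD1 i) //= Fix big1 // => j ji.
by rewrite (disjointFr (disjF i j _) Fix) // eq_sym.
Qed.

Lemma disjoint_seq_sets (T : finType) (s t : seq T) :
  ~~ has [in t] s -> [disjoint [set x in s] & [set x in t]].
Proof. by move/hasPn=> st; rewrite disjoint_subset; apply/subsetP => x; rewrite !inE => /st. Qed.

Section Differences.
Variable G : finZmodType.
Implicit Types (C : {set G}) (d g x y : G).

Definition translate C g : {set G} := [set x | x - g \in C].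

Definition block_diff_count C d : nat := #|[set u in C | u - d \in C]|.

Lemma mem_negset C x : (x \in negset C) = (- x \in C).
Proof.
apply/imsetP/idP => [[y Cy ->] | CNx]; first by rewrite opprK.
by exists (- x); rewrite ?opprK.
Qed.

Lemma card_translate C g : #|translate C g| = #|C|.
Proof.
suff -> : translate C g = [set u + g | u in C] by apply/card_imset/addIr.
apply/setP => x; rewrite inE; apply/idP/imsetP => [Cxg | [u Cu ->]]; last by rewrite addrK.
by exists (x - g); rewrite ?subrK.
Qed.

Lemma setU1_translate C g : g |: translate C g = translate (0 |: C) g.
Proof. by apply/setP => x; rewrite !inE subr_eq0. Qed.

Lemma card_translates_pair C x y :
  #|[set g | (x \in translate C g) && (y \in translate C g)]| =
  block_diff_count C (x - y).
Proof.
rewrite -(card_imset _ (inv_inj (subKr x))) (can2_imset_pre _ (subKr x) (subKr x)).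
apply: eq_card => u; rewrite !inE subKr.
by rewrite opprB addrCA -opprB.
Qed.

(* The point 0 only adds the representations d = d - 0 and d = 0 - (- d). *)
Lemma block_diff_count_setU0 C d : 0 \notin C -> d != 0 ->
  (block_diff_count (0%R |: C) d <= block_diff_count C d + (d \in C) + (- d \in C))%N.
Proof.
move=> C0 d0; rewrite -(card_set_eq_and d (d \in C)) -(card_set_eq_and (0 : G) (- d \in C)).
apply: leq_trans (leq_add (leq_card_setU _ _) (leqnn _)).
apply: leq_trans (leq_card_setU _ _); apply/subset_leq_card/subsetP => u.
rewrite !inE => /andP [/predU1P [-> | Cu] /predU1P [ud0 | Cud]].
- by move/eqP: ud0; rewrite sub0r oppr_eq0 (negbTE d0).
- by rewrite sub0r in Cud; rewrite eqxx Cud orbT.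
- by move/eqP: ud0; rewrite subr_eq0 => /eqP ud; rewrite -ud Cu eqxx orbT.
- by rewrite Cu Cud.
Qed.

Lemma block_diff_count_seq (s : seq G) g : uniq s ->
  block_diff_count [set x in s] g = count (fun u => u - g \in s) s.
Proof.
move=> uniq_s; rewrite -size_filter.
have /card_uniqP <- := filter_uniq (fun u => u - g \in s) uniq_s.
by apply: eq_card => u; rewrite !inE mem_filter andbC.
Qed.

Lemma diff_countE n (B : 'I_n -> {set G}) d : d != 0 ->
  diff_count B d = (\sum_i block_diff_count (B i) d)%N.
Proof.
move=> d0; apply: eq_bigr => i _.
have pair_inj : injective (fun u => (u, u - d)) by move=> u v [].
rewrite /block_diff_count -(card_imset _ pair_inj); apply: eq_card => -[x y].
rewrite inE /=; apply/and4P/imsetP => [[Bx By xy /eqP xyd] | [u]].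
  by exists x; rewrite -xyd ?inE subKr ?Bx.
rewrite inE => /andP [Bu Bud] [-> ->]; split; rewrite ?subKr ?eqxx //.
by rewrite -subr_eq0 subKr.
Qed.

Lemma diff_count0 n (B : 'I_n -> {set G}) : diff_count B 0 = 0%N.
Proof.
apply: big1 => i _; apply/eqP; rewrite cards_eq0; apply/eqP/setP => -[x y].
by rewrite !inE /= subr_eq0; case: eqP; rewrite ?andbF.
Qed.

Lemma card_translates_family_pair n (B : 'I_n -> {set G}) x y :
  #|[set p : 'I_n * G | (x \in translate (B p.1) p.2) && (y \in translate (B p.1) p.2)]| =
  (\sum_i block_diff_count (B i) (x - y)%R)%N.
Proof.
rewrite (card_set_pair (fun i g => (x \in translate (B i) g) && (y \in translate (B i) g))).
by apply: eq_bigr => i _; apply: card_translates_pair.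
Qed.

End Differences.

Definition signed_count (G : finZmodType) n (B : 'I_n -> {set G}) (d : G) : nat :=
  \sum_j ((d \in B j) + (- d \in B j)).

Lemma signed_count_le1 (G : finZmodType) (H : {set G}) k lambda n (B : 'I_n -> {set G}) d :
  is_BRDF H k lambda B -> (signed_count B d <= 1)%N.
Proof.
rewrite /signed_count; case=> _ [_ [disjB [disjBN disjN]]].
pose signed (s : 'I_n + 'I_n) := match s with inl j => B j | inr j => negset (B j) end.
have disj_signed s t : s != t -> [disjoint signed s & signed t].
  case: s t => [i|i] [j|j] //= ij; first exact: disjB.
    by rewrite disjoint_sym.
  exact: disjN.
have := sum_mem_disjoint_le1 d disj_signed; rewrite big_sumType /= -big_split /=.
by under eq_bigr do rewrite mem_negset.
Qed.

Section Relabelling.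
Variables T I : finType.

Definition relabel (S : I -> {set T}) (k : 'I_#|I|) : {set 'I_#|T|} :=
  enum_val @^-1: S (enum_val k).

Lemma card_relabel S k : #|relabel S k| = #|S (enum_val k)|.
Proof. exact/on_card_preimset/onW_bij/enum_val_bij. Qed.

Lemma pair_count_relabel S x y :
  pair_count (relabel S) x y = #|[set i | (enum_val x \in S i) && (enum_val y \in S i)]|.
Proof.
rewrite -(on_card_preimset (onW_bij _ (@enum_val_bij I))).
by apply: eq_card => k; rewrite !inE.
Qed.

Lemma has_nested_BIBD_family (A : I -> {set T}) (phi : I -> T) :
  (forall i, #|A i| = 4%N) ->
  (forall x y, x != y -> #|[set i | (x \in A i) && (y \in A i)]| = 1%N) ->
  (forall i, #|phi i |: A i| = 5%N) ->
  (forall x y, x != y ->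
     #|[set i | (x \in phi i |: A i) && (y \in phi i |: A i)]| <= 2)%N ->
  has_nested_BIBD #|T|.
Proof.
move=> cardA pairA cardAphi pairAphi.
have neq_val x y : x != y -> enum_val x != enum_val y by rewrite (inj_eq enum_val_inj).
exists #|I|, (relabel A); split.
  split; first exact: card_ord.
  split=> [k | x y /neq_val xy]; first by rewrite card_relabel.
  by rewrite pair_count_relabel pairA.
exists (fun k => enum_rank (phi (enum_val k))).
have relabel_point k : enum_rank (phi (enum_val k)) |: relabel A k =i
                       relabel (fun i => phi i |: A i) k.
  by move=> t; rewrite !inE -(can2_eq enum_valK enum_rankK).
split; first exact: card_ord.
split=> [k | x y /neq_val xy]; first by rewrite (eq_card (relabel_point k)) card_relabel.
have -> : pair_count (fun k => enum_rank (phi (enum_val k)) |: relabel A k) x y =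
          pair_count (relabel (fun i => phi i |: A i)) x y.
  by apply: eq_card => k; rewrite !inE -!(can2_eq enum_valK enum_rankK).
by rewrite pair_count_relabel pairAphi.
Qed.

End Relabelling.

Section NestedDevelopment.
Variables (A K : finZmodType) (n : nat) (B : 'I_n -> {set A * K}) (w : K).
Local Notation G := (A * K)%type.
Hypothesis cardA : #|A| = 4%N.
Hypothesis brdfB : is_BRDF [set x : G | x.2 == 0] 4 1 B.
Hypothesis w2_neq0 : w + w != 0.
Hypothesis B_avoids_w : forall j u, u \in B j -> (u.2 != w) && (u.2 != - w).

Definition hcoset (c : K) : {set G} := [set z | z.2 == c].

Definition nested_block (i : 'I_n * G + K) : {set G} :=
  match i with inl p => translate (B p.1) p.2 | inr c => hcoset c end.

Definition nested_point (i : 'I_n * G + K) : G :=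
  match i with inl p => p.2 | inr c => (0, c + w) end.

Local Notation shifted_hcoset c := ((0, c + w) |: hcoset c).

Lemma w_neq0 : w != 0.
Proof. by apply: contraNneq w2_neq0 => ->; rewrite addr0. Qed.

Lemma base_block_snd_neq0 j u : u \in B j -> u.2 != 0.
Proof.
case: brdfB => _ [avoidH _] Bu.
by have := disjointFr (avoidH j) Bu; rewrite inE => /negbT.
Qed.

Lemma card_base_block j : #|B j| = 4%N.
Proof. by case: brdfB => -[]. Qed.

Lemma zero_notin_base_block j : (0 : G) \notin B j.
Proof. by apply/negP => /base_block_snd_neq0; rewrite eqxx. Qed.

Lemma card_hcoset c : #|hcoset c| = 4%N.
Proof.
have pair_inj : injective (fun a : A => (a, c)) by move=> a b [].
rewrite -cardA -cardsT -(card_imset _ pair_inj); apply: eq_card => -[a b].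
rewrite inE /=; apply/eqP/imsetP => [-> | [a' _ [_ ->]]] //.
by exists a.
Qed.

Lemma card_nested_block i : #|nested_block i| = 4%N.
Proof. by case: i => [[j g] | c] /=; rewrite ?card_translate ?card_base_block ?card_hcoset. Qed.

Lemma card_nested_point_block i : #|nested_point i |: nested_block i| = 5%N.
Proof.
case: i => [[j g] | c] /=.
  by rewrite setU1_translate card_translate cardsU1 (negbTE (zero_notin_base_block j))
    card_base_block.
rewrite cardsU1 card_hcoset inE /= -{2}[c]addr0 (inj_eq (addrI c)).
by rewrite (negbTE w_neq0).
Qed.

Lemma card_hcosets_pair x y :
  #|[set c | (x \in hcoset c) && (y \in hcoset c)]| = (x.2 == y.2).
Proof.
rewrite -(card_set_eq_and x.2 (x.2 == y.2)); apply: eq_card => c; rewrite !inE.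
by rewrite eq_sym; case: eqP => // <-; rewrite eq_sym.
Qed.

Lemma mem_shifted_hcoset c x :
  x \in shifted_hcoset c -> (x.2 == c) || (x.2 == c + w).
Proof. by rewrite !inE => /orP [/eqP -> | ->]; rewrite ?eqxx ?orbT. Qed.

Lemma card_shifted_hcosets_pair_le2 x y :
  (#|[set c | (x \in shifted_hcoset c) && (y \in shifted_hcoset c)]| <= 2)%N.
Proof.
apply: (@leq_trans #|[set x.2; x.2 - w]|); last by rewrite cards2; case: (_ != _).
apply/subset_leq_card/subsetP => c; rewrite inE => /andP [/mem_shifted_hcoset + _].
by rewrite !inE => /orP [/eqP -> | /eqP ->]; rewrite ?addrK eqxx ?orbT.
Qed.

Lemma card_shifted_hcosets_pair_offH x y : x.2 != y.2 ->
  (#|[set c | (x \in shifted_hcoset c) && (y \in shifted_hcoset c)]| <=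
   ((x.2 - y.2)%R == w) + ((y.2 - x.2)%R == w))%N.
Proof.
move=> xy2; rewrite -(card_set_eq_and y.2 (x.2 - y.2 == w)).
rewrite -(card_set_eq_and x.2 (y.2 - x.2 == w)).
apply: leq_trans (leq_card_setU _ _); apply/subset_leq_card/subsetP => c.
rewrite inE => /andP [/mem_shifted_hcoset /orP [] /eqP xc /mem_shifted_hcoset /orP [] /eqP yc].
- by move: xy2; rewrite xc yc eqxx.
- by rewrite !inE xc yc eqxx addrAC subrr add0r eqxx orbT.
- by rewrite !inE xc yc eqxx addrAC subrr add0r eqxx.
- by move: xy2; rewrite xc yc eqxx.
Qed.

Lemma signed_count_onH d : d.2 = 0 -> signed_count B d = 0%N.
Proof.
have notin j u : u.2 = 0 -> u \in B j = false.
  by move=> u2; apply/negP => /base_block_snd_neq0; rewrite u2 eqxx.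
by move=> d2; apply: big1 => j _; rewrite !notin //= d2 oppr0.
Qed.

Lemma signed_count_shift_le1 d :
  (signed_count B d + ((d.2 == w) + (- d.2 == w)) <= 1)%N.
Proof.
have [/existsP [j dBj] | /existsPn dnotB] := boolP [exists j, (d \in B j) || (- d \in B j)].
  have [dw dNw] : d.2 != w /\ - d.2 != w.
    case/orP: dBj => /B_avoids_w /andP [] /=; first by rewrite eqr_oppLR.
    by rewrite eqr_opp => ? ?; split.
  by rewrite (negbTE dw) (negbTE dNw) addn0 (signed_count_le1 _ brdfB).
rewrite /signed_count big1 => [|j _]; last by case/norP: (dnotB j) => /negbTE -> /negbTE ->.
rewrite add0n; case: eqP => [-> | _]; last exact: leq_b1.
by rewrite eq_sym -subr_eq0 opprK (negbTE w2_neq0).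
Qed.

Lemma nested_block_pair_count x y : x != y ->
  #|[set i | (x \in nested_block i) && (y \in nested_block i)]| = 1%N.
Proof.
move=> xy; have d_neq0 : x - y != 0 by rewrite subr_eq0.
rewrite card_set_sum /= card_translates_family_pair card_hcosets_pair -diff_countE //.
case: brdfB => -[_ [offH onH]] _.
have [xy2 | xy2] := eqVneq x.2 y.2.
  by rewrite onH // inE /= xy2 subrr.
by rewrite offH // inE /= subr_eq0 xy2.
Qed.

Lemma nested_point_block_pair_count x y : x != y ->
  (#|[set i | (x \in nested_point i |: nested_block i) &&
              (y \in nested_point i |: nested_block i)]| <= 2)%N.
Proof.
move=> xy; have d_neq0 : x - y != 0 by rewrite subr_eq0.
rewrite card_set_sum /=.
have -> : #|[set p : 'I_n * G | (x \in p.2 |: translate (B p.1) p.2) &&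
                                (y \in p.2 |: translate (B p.1) p.2)]| =
          (\sum_j block_diff_count (0%R |: B j) (x - y)%R)%N.
  under eq_finset => p do rewrite !setU1_translate.
  exact: card_translates_family_pair.
have translates_le : (\sum_j block_diff_count (0%R |: B j) (x - y)%R <=
                      diff_count B (x - y)%R + signed_count B (x - y)%R)%N.
  rewrite diff_countE // /signed_count -big_split /=; apply: leq_sum => j _.
  by rewrite addnA; apply: block_diff_count_setU0 (zero_notin_base_block j) d_neq0.
case: brdfB => -[_ [offH onH]] _.
have [xy2 | xy2] := eqVneq x.2 y.2.
  have d2 : (x - y).2 = 0 by rewrite /= xy2 subrr.
  apply: leq_trans (leq_add translates_le (card_shifted_hcosets_pair_le2 x y)) _.
  by rewrite onH ?inE ?d2 // signed_count_onH.
apply: leq_trans (leq_add translates_le (card_shifted_hcosets_pair_offH xy2)) _.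
rewrite offH ?inE /= ?subr_eq0 // -addnA add1n ltnS -(opprB x.2).
exact: signed_count_shift_le1.
Qed.

Lemma has_nested_BIBD_development : has_nested_BIBD #|{: G}|.
Proof.
apply: (has_nested_BIBD_family (phi := nested_point)).
- exact: card_nested_block.
- exact: nested_block_pair_count.
- exact: card_nested_point_block.
- exact: nested_point_block_pair_count.
Qed.

End NestedDevelopment.

Section AdditiveTransport.
Variables (G G' : finZmodType) (f : {additive G -> G'}).
Hypothesis f_bij : bijective f.

Let f_inj : injective f := bij_inj f_bij.

Let f_surj y : exists x, y = f x.
Proof. by case: f_bij => g _ gK; exists (g y); rewrite gK. Qed.

Lemma negset_imset (C : {set G}) : negset (f @: C) = f @: negset C.
Proof. by rewrite /negset -!imset_comp; apply: eq_imset => x /=; rewrite raddfN. Qed.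

Lemma block_diff_count_imset (C : {set G}) d :
  block_diff_count (f @: C) (f d) = block_diff_count C d.
Proof.
rewrite /block_diff_count -(card_imset _ f_inj); apply: eq_card => y.
have [x ->] := f_surj y.
by rewrite (mem_imset _ _ f_inj) !inE -raddfB !(mem_imset _ _ f_inj).
Qed.

Lemma diff_count_imset n (B : 'I_n -> {set G}) d :
  diff_count (fun i => f @: B i) (f d) = diff_count B d.
Proof.
have [-> | d_neq0] := eqVneq d 0; first by rewrite raddf0 !diff_count0.
rewrite !diff_countE ?raddf_eq0 //; apply: eq_bigr => i _; exact: block_diff_count_imset.
Qed.

Lemma is_BRDF_imset (H : {set G}) (H' : {set G'}) k lambda n (B : 'I_n -> {set G}) :
  {mono f : x / x \in H >-> x \in H'} -> is_BRDF H k lambda B ->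
  is_BRDF H' k lambda (fun i => f @: B i).
Proof.
move=> fH [[cardB [offH onH]] [avoidH [disjB [disjBN disjN]]]].
have H'E : H' = f @: H.
  by apply/setP => y; have [x ->] := f_surj y; rewrite mem_imset // fH.
have disj_imset (C D : {set G}) : [disjoint C & D] -> [disjoint f @: C & f @: D].
  by rewrite imset_disjoint.
split; first split.
- by move=> i; rewrite card_imset.
- by split=> y; have [x ->] := f_surj y; rewrite diff_count_imset fH; [apply: offH | apply: onH].
split; first by move=> i; rewrite H'E; apply/disj_imset/avoidH.
split; first by move=> i j /disjB /disj_imset.
by split=> i j *; rewrite !negset_imset; apply: disj_imset; [apply: disjBN | apply: disjN].
Qed.

End AdditiveTransport.

Section PairMap.
Variables (A A' K K' : zmodType) (f : {additive A -> A'}) (g : {additive K -> K'}).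

Definition pair_map (x : A * K) : A' * K' := (f x.1, g x.2).

Fact pair_map_is_zmod_morphism : zmod_morphism pair_map.
Proof. by move=> x y; rewrite /pair_map /= !raddfB. Qed.

HB.instance Definition _ := GRing.isZmodMorphism.Build (A * K)%type (A' * K')%type
  pair_map pair_map_is_zmod_morphism.

Lemma pair_map_bij : bijective f -> bijective g -> bijective pair_map.
Proof.
case=> f' fK f'K [g' gK g'K].
by exists (fun y => (f' y.1, g' y.2)) => -[a b]; rewrite /pair_map /= ?fK ?gK ?f'K ?g'K.
Qed.

End PairMap.

Section PrimeSquareField.
Variables (F : finFieldType) (p : nat).
Hypotheses (p_pr : prime p) (cardF : #|F| = (p * p)%N).

Let pcharF : p \in [pchar F].
Proof. by apply: (@card_finPcharP F p 2) => //; rewrite cardF expn2. Qed.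

Let p_gt1 : (1 < p)%N := prime_gt1 p_pr.

Lemma natr_modp m : (m %% p)%:R = m%:R :> F.
Proof. by rewrite {2}(divn_eq m p) natrD natrM (pcharf0 pcharF) mulr0 add0r. Qed.

Lemma dvdn_Zp (a : 'Z_p) : (p %| a)%N = (a == 0).
Proof.
have lt_ap : (a < p)%N by case: a => m /=; rewrite Zp_cast.
rewrite -val_eqE /=; case: (val a) lt_ap => [|m] lt_mp; first by rewrite dvdn0.
by rewrite gtnNdvd.
Qed.

Definition Zp_natr (a : 'Z_p) : F := (a : nat)%:R.

Lemma Zp_natrD : {morph Zp_natr : a b / a + b}.
Proof.
have natr_modZp m : (m %% (Zp_trunc p).+2)%:R = m%:R :> F by rewrite Zp_cast // natr_modp.
by move=> a b; rewrite /Zp_natr /= natr_modZp natrD.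
Qed.

Lemma Zp_natr_eq0 a : (Zp_natr a == 0) = (a == 0).
Proof. by rewrite -(dvdn_pcharf pcharF) dvdn_Zp. Qed.

Lemma natr_inv_modp m : ~~ (p %| m)%N -> exists c, c%:R * m%:R = -1 :> F.
Proof.
move=> p_ndvd_m; have [c _] := Bezoutl m (prime_gt0 p_pr).
have /eqP -> : coprime p m by rewrite prime_coprime.
rewrite (dvdn_pcharf pcharF) natrD natrM => /eqP c_inv.
by exists c; apply/eqP; rewrite -subr_eq0 opprK addrC c_inv.
Qed.

Lemma exists_notin_prime_field : exists alpha : F, forall m, alpha != m%:R.
Proof.
pose g (k : 'I_p) : F := (k : nat)%:R.
have /subsetPn [alpha _ alpha_out] : ~~ ([set: F] \subset codom g).
  apply/negP => /subset_leq_card; rewrite cardsT cardF; apply/negP; rewrite -ltnNge.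
  apply: leq_ltn_trans (card_size _) _; rewrite size_codom card_ord.
  by rewrite ltn_Pmulr ?prime_gt0.
exists alpha => m; apply: contraNneq alpha_out => ->.
by rewrite -natr_modp; apply: (codom_f g (Ordinal (ltn_pmod m (prime_gt0 p_pr)))).
Qed.

Lemma prime_square_field_iso : exists f : {additive 'Z_p * 'Z_p -> F}, bijective f.
Proof.
have [alpha alpha_out] := exists_notin_prime_field.
pose f (x : 'Z_p * 'Z_p) := Zp_natr x.1 + Zp_natr x.2 * alpha.
have fD : {morph f : x y / x + y} by move=> x y; rewrite /f /= !Zp_natrD mulrDl addrACA.
have fB : zmod_morphism f by move=> x y; apply/eqP; rewrite eq_sym subr_eq -fD subrK.
pose fA : {additive 'Z_p * 'Z_p -> F} := HB.pack f (GRing.isZmodMorphism.Build _ _ f fB).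
exists fA.
apply: inj_card_bij; last by rewrite card_prod !card_ord Zp_cast // cardF.
apply: raddf_inj => -[a b] /= fab0.
have [b0 | b_neq0] := eqVneq b 0.
  by move/eqP: fab0; rewrite b0 /f /= mul0r addr0 Zp_natr_eq0 => /eqP ->.
have [c cb] : exists c, c%:R * Zp_natr b = -1 by apply: natr_inv_modp; rewrite dvdn_Zp.
have /eqP := congr1 (fun t => c%:R * t) fab0.
rewrite mulr0 mulrDr mulrA [_ * Zp_natr b]cb mulN1r subr_eq0 eq_sym -natrM.
by rewrite (negbTE (alpha_out _)).
Qed.

End PrimeSquareField.

Section Certificate.
Variables (A K : finZmodType).
Local Notation G := (A * K)%type.
Implicit Types (bl : seq (seq G)) (univ : seq G).

Definition base_blocks bl : 'I_(size bl) -> {set G} := fun j => [set x in nth [::] bl j].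
Arguments base_blocks : clear implicits.

(* Disjointness of -B_i and -B_j is omitted: it follows from that of B_i and B_j. *)
Definition brdf_certificate bl univ : bool :=
  [&& all (fun s => (size s == 4%N) && uniq s) bl,
      pairwise (fun s t => ~~ has [in t] s) bl,
      allrel (fun s t => ~~ has (fun x => - x \in t) s) bl bl,
      all (all (fun u => u.2 != 0)) bl &
      all (fun g => (g == 0) ||
             (sumn [seq count (fun u => u - g \in s) s | s <- bl] == (g.2 != 0))) univ].

Definition nesting_certificate bl univ (w : K) : bool :=
  [&& brdf_certificate bl univ, all (all (fun u => (u.2 != w) && (u.2 != - w))) bl
    & w + w != 0].

Lemma is_BRDF_certificate bl univ : (forall g, g \in univ) -> brdf_certificate bl univ ->
  is_BRDF [set x : G | x.2 == 0] 4 1 (base_blocks bl).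
Proof.
move=> univ_full /and5P [/allP blocks_ok /(pairwiseP [::]) disj /allrelP disjN /allP offH].
move=> /allP diffs.
have nth_bl (j : 'I_(size bl)) : nth [::] bl j \in bl by apply: mem_nth.
have diff_count_cert g : g != 0 -> diff_count (base_blocks bl) g = (g.2 != 0 : nat).
  move=> g_neq0; have := diffs g (univ_full g); rewrite (negbTE g_neq0) /= => /eqP <-.
  rewrite diff_countE // sumnE big_map (big_nth [::]) big_mkord; apply: eq_bigr => j _.
  by rewrite block_diff_count_seq //; case/andP: (blocks_ok _ (nth_bl j)).
have disjB (i j : 'I_(size bl)) : i != j -> [disjoint base_blocks bl i & base_blocks bl j].
  move=> ij; apply: disjoint_seq_sets; have [lt_ij | lt_ji | eq_ij] := ltngtP i j.
  - exact: disj (ltn_ord i) (ltn_ord j) lt_ij.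
  - by rewrite has_sym; apply: disj (ltn_ord j) (ltn_ord i) lt_ji.
  - by rewrite (val_inj eq_ij) eqxx in ij.
split; first split.
- move=> j; rewrite cardsE.
  by case/andP: (blocks_ok _ (nth_bl j)) => /eqP <- /card_uniqP.
- split=> g; rewrite inE => g2; last first.
    have [-> | g_neq0] := eqVneq g 0; first exact: diff_count0.
    by rewrite diff_count_cert // g2.
  by rewrite diff_count_cert ?g2 //; apply: contraNneq g2 => ->.
split.
  move=> j; rewrite disjoint_subset; apply/subsetP => u; rewrite !inE.
  exact: (allP (offH _ (nth_bl j))).
split; first exact: disjB.
split.
  move=> i j; rewrite disjoint_subset; apply/subsetP => u; rewrite !inE mem_negset inE.
  exact: (hasPn (disjN _ _ (nth_bl i) (nth_bl j))).
by move=> i j /disjB; rewrite /negset imset_disjoint //; apply: oppr_inj.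
Qed.

End Certificate.

Arguments base_blocks {A K} bl _.

Definition Zp2_enum (p : nat) : seq ('Z_p * 'Z_p) :=
  [seq (inZp a, inZp b) | a <- iota 0 p, b <- iota 0 p].

Lemma mem_Zp2_enum p : (1 < p)%N -> forall x : 'Z_p * 'Z_p, x \in Zp2_enum p.
Proof.
move=> p_gt1 [a b]; have lt_p (c : 'Z_p) : (c < p)%N by case: c => m /=; rewrite Zp_cast.
by rewrite -(valZpK a) -(valZpK b); apply: allpairs_f; rewrite mem_iota lt_p.
Qed.

Local Notation cert_group p := ('Z_2 * 'Z_2 * ('Z_p * 'Z_p))%type.

Definition cert_enum (p : nat) : seq (cert_group p) :=
  [seq (x, y) | x <- Zp2_enum 2, y <- Zp2_enum p].

Lemma mem_cert_enum p : (1 < p)%N -> forall g : cert_group p, g \in cert_enum p.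
Proof. by move=> p_gt1 [x y]; apply: allpairs_f; apply: mem_Zp2_enum. Qed.

Lemma nesting_certificate_sound (p : nat) (bl : seq (seq (cert_group p))) :
  prime p -> nesting_certificate bl (cert_enum p) (1, 0) ->
  forall F4 Fq : finFieldType, #|F4| = 4%N -> #|Fq| = (p * p)%N ->
  has_BRDF [set x : F4 * Fq | x.2 == 0] 4 1 /\ has_nested_BIBD (4 * (p * p)).
Proof.
move=> p_pr /and3P [cert avoids_w w2_neq0] F4 Fq cardF4 cardFq.
have brdf := is_BRDF_certificate (mem_cert_enum (prime_gt1 p_pr)) cert.
split.
  have [f f_bij] := prime_square_field_iso (isT : prime 2) cardF4.
  have [g g_bij] := prime_square_field_iso p_pr cardFq.
  exists (size bl), (fun j => pair_map f g @: base_blocks bl j).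
  apply: (is_BRDF_imset (pair_map_bij f_bij g_bij) _ brdf) => x.
  by rewrite !inE /= raddf_eq0 //; apply: bij_inj.
have cardA : #|{: 'Z_2 * 'Z_2}| = 4%N by rewrite card_prod card_ord.
have := has_nested_BIBD_development cardA brdf w2_neq0.
rewrite card_prod cardA card_prod card_ord Zp_cast ?prime_gt1 //; apply.
move=> j u; rewrite inE; apply: (allP (allP avoids_w _ (mem_nth _ (ltn_ord j)))).
Qed.

Definition cert_point (p a b c d : nat) : cert_group p := ((inZp a, inZp b), (inZp c, inZp d)).

Local Notation e5 := (cert_point 5).
Definition bl5 : seq (seq (cert_group 5)) := [:: [:: e5 1 1 0 3; e5 0 1 0 2; e5 0 1 2 2; e5 1 1 1 4];
  [:: e5 0 0 4 4; e5 0 0 0 3; e5 1 1 3 2; e5 0 0 1 3];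
  [:: e5 1 0 4 2; e5 1 1 3 3; e5 0 0 0 1; e5 1 0 2 1];
  [:: e5 0 0 4 3; e5 1 0 1 1; e5 0 1 1 2; e5 0 1 1 4];
  [:: e5 1 0 2 2; e5 1 0 1 4; e5 0 0 2 0; e5 0 1 3 1];
  [:: e5 0 1 2 0; e5 1 0 1 2; e5 0 1 4 2; e5 0 0 2 2];
  [:: e5 1 0 3 0; e5 1 1 1 3; e5 1 1 3 1; e5 1 0 2 3];
  [:: e5 0 0 2 4; e5 0 1 0 1; e5 1 1 3 0; e5 1 1 3 4]].

Lemma bl5_certificate : nesting_certificate bl5 (cert_enum 5) (1, 0).
Proof. by vm_compute. Qed.

Local Notation e7 := (cert_point 7).
Definition bl7 : seq (seq (cert_group 7)) := [:: [:: e7 0 0 0 5; e7 0 1 1 1; e7 1 1 5 0; e7 0 1 3 3];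
  [:: e7 1 0 2 1; e7 0 1 6 4; e7 0 0 4 3; e7 1 0 5 0];
  [:: e7 1 0 3 2; e7 1 0 1 4; e7 0 1 3 0; e7 0 0 0 3];
  [:: e7 0 1 2 3; e7 1 1 0 5; e7 0 0 3 5; e7 1 1 1 1];
  [:: e7 1 1 2 4; e7 1 0 2 2; e7 1 0 0 6; e7 1 0 4 3];
  [:: e7 0 1 1 5; e7 1 0 6 5; e7 0 0 0 1; e7 1 1 4 2];
  [:: e7 0 1 3 6; e7 0 0 1 6; e7 0 0 2 0; e7 1 0 4 1];
  [:: e7 0 0 4 5; e7 0 0 4 6; e7 0 1 0 6; e7 0 0 1 4];
  [:: e7 1 0 4 4; e7 0 0 5 2; e7 0 1 3 5; e7 1 0 0 2];
  [:: e7 0 0 1 2; e7 1 0 1 1; e7 1 0 3 5; e7 1 0 1 6];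
  [:: e7 1 1 3 3; e7 0 0 3 6; e7 0 1 6 1; e7 0 1 0 3];
  [:: e7 1 1 5 2; e7 1 1 4 5; e7 1 0 0 4; e7 0 1 2 6];
  [:: e7 0 1 0 5; e7 1 0 2 6; e7 0 1 6 5; e7 0 1 2 5];
  [:: e7 0 0 1 3; e7 1 0 1 5; e7 1 0 2 3; e7 1 1 2 6];
  [:: e7 1 1 1 6; e7 0 0 5 4; e7 0 0 5 1; e7 1 1 4 3];
  [:: e7 1 1 3 1; e7 0 0 2 1; e7 1 0 3 0; e7 1 1 4 0]].

Lemma bl7_certificate : nesting_certificate bl7 (cert_enum 7) (1, 0).
Proof. by vm_compute. Qed.

Local Notation e11 := (cert_point 11).
Definition bl11 : seq (seq (cert_group 11)) := [:: [:: e11 0 0 7 1; e11 0 0 9 2; e11 1 1 6 3; e11 0 1 1 6];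
  [:: e11 0 0 1 1; e11 0 0 7 4; e11 1 1 9 7; e11 0 1 5 5];
  [:: e11 1 1 8 9; e11 1 1 4 7; e11 0 0 10 5; e11 1 0 9 10];
  [:: e11 1 0 0 4; e11 1 0 10 9; e11 0 1 6 3; e11 1 1 3 7];
  [:: e11 1 1 10 9; e11 1 1 7 2; e11 0 0 6 6; e11 1 0 8 7];
  [:: e11 0 0 2 10; e11 1 0 3 7; e11 0 0 7 0; e11 1 0 9 3];
  [:: e11 0 1 2 7; e11 1 1 5 9; e11 0 1 6 10; e11 1 1 1 8];
  [:: e11 1 1 3 4; e11 0 1 1 10; e11 1 1 4 2; e11 0 1 0 7];
  [:: e11 1 1 2 9; e11 0 1 7 5; e11 1 1 5 3; e11 0 1 4 7];
  [:: e11 0 1 4 2; e11 1 1 8 1; e11 0 1 2 6; e11 1 1 10 7];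
  [:: e11 0 1 3 3; e11 0 1 3 0; e11 0 0 7 2; e11 0 0 4 2];
  [:: e11 1 1 8 8; e11 1 1 8 10; e11 1 0 9 5; e11 1 0 0 5];
  [:: e11 0 1 10 3; e11 0 1 10 9; e11 0 0 2 5; e11 0 0 8 5];
  [:: e11 0 1 4 9; e11 0 1 4 5; e11 0 0 2 4; e11 0 0 9 4];
  [:: e11 1 1 1 6; e11 1 1 1 5; e11 1 0 6 2; e11 1 0 5 2];
  [:: e11 1 1 3 5; e11 0 0 7 7; e11 0 1 8 3; e11 0 0 0 4];
  [:: e11 1 0 7 4; e11 0 1 8 10; e11 0 0 0 9; e11 0 1 9 1];
  [:: e11 0 0 7 8; e11 1 1 10 4; e11 1 0 8 1; e11 1 1 2 10];
  [:: e11 0 0 4 6; e11 1 1 2 5; e11 1 0 7 7; e11 1 1 0 1];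
  [:: e11 1 1 9 4; e11 0 0 3 1; e11 0 1 7 7; e11 0 0 8 0];
  [:: e11 0 1 9 6; e11 0 1 0 3; e11 1 1 5 6; e11 1 0 7 6];
  [:: e11 1 0 9 9; e11 1 0 4 0; e11 0 0 8 9; e11 0 1 3 9];
  [:: e11 0 0 5 10; e11 0 0 1 5; e11 1 0 2 10; e11 1 1 9 10];
  [:: e11 0 0 9 8; e11 0 0 8 4; e11 1 0 0 8; e11 1 1 10 8];
  [:: e11 1 0 2 3; e11 1 0 10 2; e11 0 0 8 3; e11 0 1 5 3];
  [:: e11 1 0 7 8; e11 0 1 4 10; e11 1 0 0 1; e11 1 0 3 9];
  [:: e11 1 0 9 6; e11 0 1 0 1; e11 1 0 10 7; e11 1 0 8 9];
  [:: e11 0 1 3 4; e11 1 0 9 0; e11 0 1 6 7; e11 0 1 0 2];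
  [:: e11 1 0 6 3; e11 0 1 2 2; e11 1 0 4 1; e11 1 0 8 8];
  [:: e11 1 0 10 3; e11 0 1 9 0; e11 1 0 4 8; e11 1 0 5 7];
  [:: e11 0 0 6 10; e11 1 1 4 5; e11 1 0 8 6; e11 1 0 2 9];
  [:: e11 0 0 6 8; e11 1 1 0 4; e11 1 0 1 7; e11 1 0 5 5];
  [:: e11 1 1 5 1; e11 0 0 9 0; e11 0 1 1 9; e11 0 1 2 3];
  [:: e11 1 1 6 9; e11 0 0 7 6; e11 0 1 5 0; e11 0 1 8 4];
  [:: e11 0 1 6 5; e11 1 0 9 7; e11 1 1 3 0; e11 1 1 1 1];
  [:: e11 1 0 5 10; e11 0 0 5 0; e11 0 0 7 3; e11 1 1 5 5];
  [:: e11 1 0 0 2; e11 0 0 0 5; e11 0 0 6 3; e11 1 1 0 9];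
  [:: e11 1 0 7 1; e11 0 0 7 10; e11 0 0 3 4; e11 1 1 7 0];
  [:: e11 0 1 8 9; e11 1 1 8 3; e11 1 1 7 7; e11 0 0 8 6];
  [:: e11 1 0 6 5; e11 0 0 6 9; e11 0 0 3 10; e11 1 1 6 7]].

Lemma bl11_certificate : nesting_certificate bl11 (cert_enum 11) (1, 0).
Proof. by vm_compute. Qed.

Theorem mainTheorem18 (q : nat) (Hq : q \in [:: 25%N; 49%N; 121%N])
    (F4 Fq : finFieldType) (H4 : #|F4| = 4%N) (Hcq : #|Fq| = q) :
  has_BRDF [set x : F4 * Fq | x.2 == 0] 4 1 /\ has_nested_BIBD (4 * q).
Proof.
move: Hq Hcq; rewrite !inE => /or3P [] /eqP -> Hcq.
- exact: nesting_certificate_sound (isT : prime 5) bl5_certificate _ _ H4 Hcq.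
- exact: nesting_certificate_sound (isT : prime 7) bl7_certificate _ _ H4 Hcq.
- exact: nesting_certificate_sound (isT : prime 11) bl11_certificate _ _ H4 Hcq.
Qed.
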